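(* Let $C$ be the Cantor set, $\psi_{\mathcal{H}}$ an increasing submodular setfunction on the clopen subsets of $C$ with $\psi_{\mathcal{H}}(\emptyset)=0$, let $\psi_{\mathcal{K}}(K)=\inf\{\psi_{\mathcal{H}}(H)\colon H \text{ clopen},\ K\subseteq H\}$ for compact $K\subseteq C$, and let $\psi_{\mathcal{B}}(B)=\sup\{\psi_{\mathcal{K}}(K)\colon K\subseteq B \text{ compact}\}$ for Borel $B\subseteq C$. Let $q\in\mathbb{N}$ and let $F\colon C\to[q]$ be Borel measurable. Then for every $\varepsilon>0$ there exists a continuous map $G\colon C\to[q]$ such that $d(\psi_{\mathcal{B}}\circ F^{-1},\psi_{\mathcal{B}}\circ G^{-1})<\varepsilon$.
   Context: A setfunction is increasing if $X\subseteq Y$ implies $\varphi(X)\le\varphi(Y)$ and submodular if $\varphi(X)+\varphi(Y)\ge\varphi(X\cap Y)+\varphi(X\cup Y)$. For a setfunction $\varphi$ on a set-algebra $(J,\mathcal{B})$ and a map $F\colon J\to[k]$ with $F^{-1}(i)\in\mathcal{B}$, $\varphi\circ F^{-1}$ is the setfunction $A\mapsto\varphi(F^{-1}(A))$ on $2^{[k]}$ (a quotient of $\varphi$); $Q_k(\varphi)\subseteq\mathbb{R}^{2^k}$ is the set of all quotients of $\varphi$ on $[k]$. The pseudometric $d$ between setfunctions is $d(\varphi_1,\varphi_2)=\sum_{k=1}^\infty 2^{-k}d_H^{(k)}(Q_k(\varphi_1),Q_k(\varphi_2))$, where $d_H^{(k)}$ is the Hausdorff distance in Euclidean $\mathbb{R}^{2^k}$.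 ($[q]$ carries the discrete topology.) *)

From HB Require Import structures.
From mathcomp Require Import all_boot all_order all_algebra.
From mathcomp Require Import all_classical all_reals all_analysis.
Set Implicit Arguments. Unset Strict Implicit. Unset Printing Implicit Defensive.
Import Order.TTheory GRing.Theory Num.Theory.
Local Open Scope classical_set_scope.
Local Open Scope ring_scope.

Notation C := cantor_space.

Definition clopen (A : set C) : Prop := open A /\ closed A.

Definition borel (B : set C) : Prop := <<s [set U : set C | open U] >> B.

Section SetFun.
Variable R : realType.

Definition increasing_on_clopen (psi : set C -> R) : Prop :=
  forall X Y, clopen X -> clopen Y -> X `<=` Y -> psi X <= psi Y.

Definition submodular_on_clopen (psi : set C -> R) : Prop :=
  forall X Y, clopen X -> clopen Y ->
    psi (X `&` Y) + psi (X `|` Y) <= psi X + psi Y.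

Definition psiK (psiH : set C -> R) (K : set C) : R :=
  inf [set psiH H | H in [set H | clopen H /\ K `<=` H]].

Definition psiB (psiH : set C -> R) (B : set C) : R :=
  sup [set psiK psiH K | K in [set K | compact K /\ K `<=` B]].

Definition borel_map (q : nat) (F : C -> 'I_q) : Prop :=
  forall i : 'I_q, borel (F @^-1` [set i]).

Definition continuous_discrete (q : nat) (G : C -> 'I_q) : Prop :=
  forall A : set 'I_q, open (G @^-1` A).

Definition pushB (psiH : set C -> R) (q : nat) (F : C -> 'I_q)
  : {set 'I_q} -> R :=
  fun A => psiB psiH (F @^-1` [set i | i \in A]).

Definition quot (q k : nat) (phi : {set 'I_q} -> R) (f : 'I_q -> 'I_k)
  : {set 'I_k} -> R := fun A => phi (f @^-1: A).

Definition edist (k : nat) (x y : {set 'I_k} -> R) : R :=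
  Num.sqrt (\sum_(A : {set 'I_k}) (x A - y A) ^+ 2).

(* Hausdorff distance d_H^(k)(Q_k(phi1), Q_k(phi2)) *)
Definition dH (q1 q2 : nat) (phi1 : {set 'I_q1} -> R) (phi2 : {set 'I_q2} -> R)
  (k : nat) : R :=
  Num.max
    (sup [set inf [set edist (quot phi1 f) (quot phi2 g)
                  | g in [set: 'I_q2 -> 'I_k]] | f in [set: 'I_q1 -> 'I_k]])
    (sup [set inf [set edist (quot phi1 f) (quot phi2 g)
                  | f in [set: 'I_q1 -> 'I_k]] | g in [set: 'I_q2 -> 'I_k]]).

(* d(phi1, phi2) = sum_{k>=1} 2^{-k} d_H^(k)(Q_k phi1, Q_k phi2), as an
   extended real (a series of nonnegative terms). *)
Definition setfun_dist (q1 q2 : nat) (phi1 : {set 'I_q1} -> R)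
  (phi2 : {set 'I_q2} -> R) : \bar R :=
  (\sum_(1 <= k <oo) (((2%:R : R) ^- k * dH phi1 phi2 k)%:E))%E.

End SetFun.

From Pilot Require Import Defs.
From HB Require Import structures.
From mathcomp Require Import all_boot all_order all_algebra.
From mathcomp Require Import all_classical all_reals all_analysis.
From mathcomp Require Import ring lra.
From Stdlib Require Arith.Cantor.
Import Order.TTheory GRing.Theory Num.Theory.
Local Open Scope classical_set_scope.
Local Open Scope ring_scope.

Set Implicit Arguments. Unset Strict Implicit. Unset Printing Implicit Defensive.

(* The proof is Choquet's capacitability theorem for psiB.  This setfunction is
   a capacity on the Cantor space: it is monotone, strongly subadditive on open
   sets (from the submodularity of psiH), and its outer envelope
     psiO X = inf { psiB U | U open, X `<=` U }
   is continuous along nondecreasing sequences.  Hence psiO and psiB agree on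
   analytic sets, in particular on Borel sets.  So for each of the finitely many
   A `<=` [q] there are a compact K_A and an open U_A with
   K_A `<=` F^-1(A) `<=` U_A whose capacities are within delta of
   psiB (F^-1(A)).  By compactness some depth N separates all of them, and a map
   G depending only on the first N coordinates, with K_A `<=` G^-1(A) `<=` U_A,
   is continuous and has psiB o G^-1 within delta of psiB o F^-1 at every A.
   Finally a pointwise bound delta on 2^[q] bounds every Hausdorff distance
   d_H^(k) by 2^(k/2) delta, hence d by 3 delta. *)

(** * Cylinders of the Cantor space *)

Definition cylinder (x : C) (n : nat) : set C :=
  [set y : C | forall i, (i < n)%N -> y i = x i].

Lemma cylinderS (x : C) m n : (m <= n)%N -> cylinder x n `<=` cylinder x m.
Proof. by move=> mn y yx i im; apply: yx; exact: leq_trans im mn. Qed.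

Lemma cylinder_sym (x y : C) n : cylinder x n y -> cylinder y n x.
Proof. by move=> xy i /xy ->. Qed.

Lemma cylinder_trans (x y z : C) n :
  cylinder x n y -> cylinder y n z -> cylinder x n z.
Proof. by move=> xy yz i ilt; rewrite yz // xy. Qed.

Lemma cylinder_center (x y : C) n : cylinder x n y -> cylinder y n = cylinder x n.
Proof.
move=> xy; rewrite eqEsubset; split => z; first exact: cylinder_trans.
exact/cylinder_trans/cylinder_sym.
Qed.

Lemma near_coord (x : C) i : \forall y \near x, (y : C) i = x i.
Proof.
apply: (@proj_continuous nat (fun _ => bool) i x [set x i]).
by apply: open_nbhs_nbhs; split; [exact: discrete_open|].
Qed.

Lemma nbhs_cylinder (x : C) n : nbhs x (cylinder x n).
Proof.
apply: (filterS _ (filter_forall _ (fun i : 'I_n => near_coord x i))) => y yx i ilt.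
exact: yx (Ordinal ilt).
Qed.

Lemma cylinder_nbhs (x : C) (U : set C) : nbhs x U -> exists n, cylinder x n `<=` U.
Proof.
pose G := filter_from [set: nat] (cylinder x).
have GF : Filter G.
  apply: filter_from_filter; first by exists 0%N.
  move=> i j _ _; exists (maxn i j) => //; rewrite subsetI.
  by split; apply: cylinderS; [exact: leq_maxl|exact: leq_maxr].
have Gx : G --> x.
  apply/cvg_sup => N V [W] [[Z] oZ <-] ZxN WV.
  by apply: (filterS WV); exists N.+1 => // y yx /=; rewrite /= (yx N (ltnSn N)).
by move=> /Gx [n _ h]; exists n.
Qed.

Lemma open_cylinderP (U : set C) :
  open U <-> forall x, U x -> exists n, cylinder x n `<=` U.
Proof.
rewrite openE; split; first by move=> oU x /oU; exact: cylinder_nbhs.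
by move=> h x /h [n /filterS]; apply; exact: nbhs_cylinder.
Qed.

Definition finitely_determined (S : set C) :=
  exists N, forall z z', cylinder z N z' -> S z -> S z'.

Lemma finitely_determined_clopen S : finitely_determined S -> clopen S.
Proof.
have fd_open S' : finitely_determined S' -> open S'.
  by move=> [N fd]; apply/open_cylinderP => x S'x; exists N => y /fd; apply.
move=> fdS; split; first exact: fd_open.
rewrite -openC; apply: fd_open; case: fdS => N fd.
by exists N => z z' zz' nSz Sz'; exact: nSz (fd z' z (cylinder_sym zz') Sz').
Qed.

Lemma cylinder_clopen (x : C) n : clopen (cylinder x n).
Proof.
apply: finitely_determined_clopen; exists n => y z yz xy.
exact: cylinder_trans xy yz.
Qed.

Lemma cantor_compactP (K : set C) : compact K <-> closed K.
Proof.
split; first exact: compact_closed cantor_space_hausdorff.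
by move=> cK; exact: subclosed_compact cK cantor_space_compact (@subsetT _ K).
Qed.

Lemma compact_nondecreasing_open_cover (K : set C) (U : nat -> set C) :
  compact K -> (forall n, open (U n)) -> (forall n, U n `<=` U n.+1) ->
  K `<=` \bigcup_n U n -> exists n, K `<=` U n.
Proof.
move=> cK oU incU KU.
have mono m n : (m <= n)%N -> U m `<=` U n.
  elim: n => [|n IH]; first by rewrite leqn0 => /eqP ->.
  by rewrite leq_eqVlt ltnS => /predU1P[->//|/IH mn]; exact: subset_trans mn (incU n).
move: cK; rewrite compact_cover => /(_ nat [set: nat] U (fun n _ => oU n) KU).
move=> [D _ KD]; exists (\max_(i <- finmap.enum_fset D) i) => x /KD [i iD Uix].
by apply: (mono i) => //; apply: leq_bigmax_seq.
Qed.

Lemma closed_nonincreasing_subset_open (L : nat -> set C) (O : set C) :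
  (forall n, closed (L n)) -> (forall n, L n.+1 `<=` L n) -> open O ->
  \bigcap_n L n `<=` O -> exists n, L n `<=` O.
Proof.
move=> cL decL oO LO.
have [||||n nLO] := @compact_nondecreasing_open_cover (~` O) (fun n => ~` L n).
- by apply/cantor_compactP; rewrite closedC.
- by move=> n; rewrite openC.
- by move=> n z nLz /decL.
- move=> z nOz; apply: contrapT => nLz; apply/nOz/LO => n _.
  by apply: contrapT => nLnz; apply: nLz; exists n.
by exists n => z Lz; apply: contrapT => /nLO.
Qed.

Lemma cylinder_lebesgue_number (K : set C) (P : set C -> Prop) : compact K ->
  (forall A B, B `<=` A -> P A -> P B) ->
  (forall x, K x -> exists n, P (cylinder x n)) ->
  exists N, forall x, K x -> P (cylinder x N).
Proof.
move=> cK Pdown KP.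
have /choice [n Pn] : forall x, exists n, K x -> P (cylinder x n).
  move=> x; have [Kx|nKx] := pselect (K x); last by exists 0%N.
  by have [n Pn] := KP x Kx; exists n.
move: cK; rewrite compact_cover => /(_ C K (fun x => cylinder x (n x))
   (fun x _ => (cylinder_clopen x (n x)).1)) [x Kx|D DK KD]; first by exists x.
exists (\max_(x <- finmap.enum_fset D) n x) => y Ky.
have [x Dx xy] := KD y Ky.
apply: Pdown (Pn x _); last by have := DK x Dx; rewrite inE.
by rewrite -(cylinder_center xy); apply/cylinderS/leq_bigmax_seq.
Qed.

Lemma clopen_between (K U : set C) : compact K -> open U -> K `<=` U ->
  exists H, [/\ clopen H, K `<=` H & H `<=` U].
Proof.
move=> cK oU KU.
have [N KNU] := @cylinder_lebesgue_number K (fun A => A `<=` U) cK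
  (fun A B BA AU => subset_trans BA AU)
  (fun x Kx => cylinder_nbhs (open_nbhs_nbhs (conj oU (KU x Kx)))).
exists (\bigcup_(x in K) cylinder x N); split.
- apply: finitely_determined_clopen; exists N => z z' zz' [x Kx xz].
  by exists x => //; exact: cylinder_trans xz zz'.
- by move=> x Kx; exists x.
- by move=> y [x Kx xy]; exact: KNU x Kx y xy.
Qed.

Lemma continuous_selection q (W : 'I_q -> set C) :
  (forall x : C, exists i, nbhs x (W i)) ->
  exists G : C -> 'I_q, continuous_discrete G /\ forall x, W (G x) x.
Proof.
move=> Wx.
have [N NW] : exists N, forall x, setT x -> exists i, cylinder x N `<=` W i.
  apply: (@cylinder_lebesgue_number _ (fun A => exists i, A `<=` W i)).
  - exact: cantor_space_compact.
  - by move=> A B BA [i AW]; exists i; exact: subset_trans BA AW.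
  - by move=> x _; have [i /cylinder_nbhs [n xnW]] := Wx x; exists n, i.
have /choice [g gW] := fun x => NW x I.
pose trunc (x : C) : C := fun j => if (j < N)%N then x j else false.
have truncE x y : cylinder x N y -> trunc y = trunc x.
  by move=> xy; apply: funext => j; rewrite /trunc; case: ifP => // /xy ->.
exists (g \o trunc); split => [A|x].
  apply: (finitely_determined_clopen _).1; exists N => x y xy.
  by rewrite /= (truncE _ _ xy).
by apply: (gW (trunc x) x) => j jN; rewrite /trunc jN.
Qed.

Lemma continuous_sandwich q (F : C -> 'I_q) (K U : {set 'I_q} -> set C) :
  (forall A, closed (K A)) -> (forall A, open (U A)) ->
  (forall A : {set 'I_q}, K A `<=` F @^-1` [set i | i \in A]) ->
  (forall A : {set 'I_q}, F @^-1` [set i | i \in A] `<=` U A) ->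
  exists G : C -> 'I_q, continuous_discrete G /\ forall A : {set 'I_q},
    K A `<=` G @^-1` [set i | i \in A] /\ G @^-1` [set i | i \in A] `<=` U A.
Proof.
move=> cK oU KF FU.
pose W i := [set x | forall A : {set 'I_q}, if i \in A then U A x else ~ K A x].
have [|G [cG GW]] := @continuous_selection q W.
  move=> x; exists (F x).
  suff nearA : forall A : {set 'I_q},
      \forall y \near x, if F x \in A then U A y else ~ K A y.
    exact: (@filter_forall _ _ _ _ _ nearA).
  move=> A; case: (boolP (F x \in A)) => FxA; apply: open_nbhs_nbhs; split.
  - exact: oU.
  - exact: FU.
  - by rewrite openC.
  - by move=> /KF; rewrite /= (negbTE FxA).
exists G; split => // A; split => x /=.
  by move=> Kx; apply: contrapT => /negP GxA; have := GW x A; rewrite (negbTE GxA).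
by move=> GxA; have := GW x A; rewrite GxA.
Qed.

(** * Analytic subsets of the Cantor space *)

Definition reindex (s : nat -> nat) (z : C) : C := fun i => z (s i).

Lemma reindex_continuous s : continuous (reindex s).
Proof.
move=> x U /cylinder_nbhs [n xnU].
apply: (filterS _ (filter_forall _ (fun i : 'I_n => near_coord x (s i)))) => y yx.
by apply: xnU => i ilt; exact: yx (Ordinal ilt).
Qed.

Lemma reindex_comp_continuous s t : continuous (reindex s \o reindex t).
Proof. exact: reindex_continuous (t \o s). Qed.

Definition evens : C -> C := reindex double.
Definition odds : C -> C := reindex (fun i => i.*2.+1).
Definition interleave (x y : C) : C := fun i => if odd i then y i./2 else x i./2.

Lemma evens_interleave x y : evens (interleave x y) = x.
Proof.
by apply: funext => i; rewrite /evens /reindex /interleave odd_double doubleK.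
Qed.

Lemma odds_interleave x y : odds (interleave x y) = y.
Proof.
apply: funext => i; rewrite /odds /reindex /interleave /= odd_double /=.
by rewrite -[X in y X = _]/(uphalf i.*2) uphalf_double.
Qed.

Lemma interleave_evens_odds z : interleave (evens z) (odds z) = z.
Proof.
apply: funext => i; rewrite /interleave /evens /odds /reindex.
have := odd_double_half i; case: odd => /= h; congr z.
  by rewrite -[in RHS]h add1n.
by rewrite -[in RHS]h add0n.
Qed.

Lemma interleave_continuous (T : topologicalType) (f g : T -> C) :
  continuous f -> continuous g -> continuous (fun t => interleave (f t) (g t)).
Proof.
move=> cf cg t U /cylinder_nbhs [n tnU].
have fnt : nbhs t (f @^-1` cylinder (f t) n) := cf t _ (nbhs_cylinder (f t) n).
have gnt : nbhs t (g @^-1` cylinder (g t) n) := cg t _ (nbhs_cylinder (g t) n).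
apply: (filterS _ (filterI fnt gnt)) => s [fs gs]; apply: tnU => i ilt.
have i2n : (i./2 < n)%N.
  by apply: leq_ltn_trans ilt; rewrite leq_half_double -addnn; apply/leqW/leq_addr.
by rewrite /interleave; case: odd; [rewrite gs|rewrite fs].
Qed.

Definition column (k : nat) : C -> C := reindex (fun j => Cantor.to_nat (k, j)).

Definition marker (k : nat) : set C := cylinder (fun i => i == k) k.+1.

Lemma marker_inj k l w : marker k w -> marker l w -> k = l.
Proof.
have lt_marker k' l' : (k' < l')%N -> marker k' w -> marker l' w -> False.
  move=> kl wk wl; have := wk k' (ltnSn k').
  by rewrite wl ?(ltn_eqF kl) ?eqxx // ltnW.
move=> wk wl; case: (ltngtP k l) => // kl.
  by case: (lt_marker k l kl wk wl).
by case: (lt_marker l k kl wl wk).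
Qed.

(* [interleave] identifies C x C with C; an analytic set is the projection
   onto the first factor of an F_sigma_delta set of C x C. *)
Definition projection (E : set C) : set C := [set x | exists y, E (interleave x y)].

Definition analytic (A : set C) := exists P : nat -> nat -> set C,
  (forall n m, closed (P n m)) /\
  A = projection [set z | forall n, exists m, P n m z].

Lemma analytic_closed (S : set C) : closed S -> analytic S.
Proof.
move=> cS; exists (fun _ _ => evens @^-1` S); split.
  by move=> _ _; apply: preimage_closed cS => z _; exact: reindex_continuous.
rewrite eqEsubset; split => x /=.
  by move=> Sx; exists x => n; exists 0%N; rewrite /= evens_interleave.
by move=> [y /(_ 0%N) [m]]; rewrite /= evens_interleave.
Qed.

Lemma analytic_bigcap (A : nat -> set C) :
  (forall k, analytic (A k)) -> analytic (\bigcap_k A k).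
Proof.
move=> /choice [P PA].
pose Q n m := (fun z => interleave (evens z) (column (Cantor.of_nat n).1 (odds z)))
  @^-1` P (Cantor.of_nat n).1 (Cantor.of_nat n).2 m.
exists Q; split.
  move=> n m; apply: preimage_closed (proj1 (PA _) _ _) => z _.
  apply: interleave_continuous; first exact: reindex_continuous.
  exact: reindex_comp_continuous.
rewrite eqEsubset; split => x /=.
- move=> Ax; have /choice [y yA] : forall k, exists y,
      forall n, exists m, P k n m (interleave x y).
    by move=> k; move: (Ax k I); rewrite (proj2 (PA k)).
  exists (fun i => y (Cantor.of_nat i).1 (Cantor.of_nat i).2) => n.
  have [m Pm] := yA (Cantor.of_nat n).1 (Cantor.of_nat n).2; exists m.
  rewrite /Q /= evens_interleave odds_interleave.
  congr (P _ _ _ (interleave x _)) : Pm.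
  by apply: funext => j; rewrite /column /reindex Cantor.cancel_of_to.
- move=> [y yQ] k _; rewrite (proj2 (PA k)); exists (column k y) => n.
  have [m Qm] := yQ (Cantor.to_nat (k, n)); exists m.
  by move: Qm; rewrite /Q Cantor.cancel_of_to /= evens_interleave odds_interleave.
Qed.

(* A witness for a point of [A k] carries the marker of [k] on its even
   coordinates; markers are disjoint, so [k] is the same for all [n]. *)
Lemma analytic_bigcup (A : nat -> set C) :
  (forall k, analytic (A k)) -> analytic (\bigcup_k A k).
Proof.
move=> /choice [P PA].
pose Q n m := (evens \o odds) @^-1` marker (Cantor.of_nat m).1 `&`
  (fun z => interleave (evens z) (odds (odds z))) @^-1`
    P (Cantor.of_nat m).1 n (Cantor.of_nat m).2.
exists Q; split.
  move=> n m; apply: closedI; apply: preimage_closed.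
  - by move=> z _; exact: reindex_comp_continuous.
  - exact: (cylinder_clopen _ _).2.
  - move=> z _; apply: interleave_continuous; first exact: reindex_continuous.
    exact: reindex_comp_continuous.
  - exact: (proj1 (PA _)).
rewrite eqEsubset; split => x /=.
- move=> [k _]; rewrite (proj2 (PA k)) => -[yk ykP].
  exists (interleave (fun i => i == k) yk) => n.
  have [m Pm] := ykP n; exists (Cantor.to_nat (k, m)).
  by rewrite /Q Cantor.cancel_of_to /= !odds_interleave !evens_interleave.
- move=> [y yQ]; have [m0 [+ _]] := yQ 0%N.
  rewrite /= odds_interleave; set k := (Cantor.of_nat m0).1 => yk.
  exists k => //; rewrite (proj2 (PA k)); exists (odds y) => n.
  have [m []] := yQ n; rewrite /= odds_interleave evens_interleave => ym.
  by rewrite (marker_inj ym yk); exists (Cantor.of_nat m).2.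
Qed.

Lemma analytic_open (U : set C) : open U -> analytic U.
Proof.
move=> oU.
have -> : U = \bigcup_m [set x | cylinder x m `<=` U].
  rewrite eqEsubset; split => [x /(proj1 (open_cylinderP U) oU) [m xmU]|x [m _]].
    by exists m.
  by apply; exact: cylinder_sym.
apply: analytic_bigcup => m; apply: analytic_closed.
apply: (finitely_determined_clopen _).2; exists m => z z' zz' zU y z'y.
by apply: zU; exact: cylinder_trans zz' z'y.
Qed.

Lemma borel_analytic (B : set C) : borel B -> analytic B.
Proof.
suff : borel `<=` [set B | analytic B /\ analytic (~` B)] by move=> h /h [].
apply: smallest_sub.
  split.
  - split; first exact/analytic_closed/closed0.
    by rewrite setC0; exact/analytic_open/openT.
  - by move=> A [AA AAC]; rewrite /= setTD setCK.
  - move=> A AA; split; first by apply: analytic_bigcup => k; case: (AA k).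
    by rewrite setC_bigcup; apply: analytic_bigcap => k; case: (AA k).
move=> U oU; split; first exact: analytic_open.
by apply: analytic_closed; rewrite closedC.
Qed.

Lemma analytic_preimage q (F : C -> 'I_q) (A : {set 'I_q}) :
  borel_map F -> analytic (F @^-1` [set i | i \in A]).
Proof.
move=> Fborel.
pose fiber k : set C :=
  if insub k is Some i then if i \in A then F @^-1` [set i] else set0 else set0.
have -> : F @^-1` [set i | i \in A] = \bigcup_k fiber k.
  rewrite eqEsubset; split => [x /= FAx|x [k _]].
    by exists (val (F x)) => //; rewrite /fiber valK FAx.
  by rewrite /fiber; case: insub => // i; case: ifP => // iA /= ->.
apply: analytic_bigcup => k; rewrite /fiber; case: insub => [i|].
  case: ifP => _; last exact/analytic_closed/closed0.
  by apply/borel_analytic; exact: Fborel.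
exact/analytic_closed/closed0.
Qed.

(** * The capacity psiB *)

Section Capacity.
Variables (R : realType) (psiH : set C -> R).
Hypothesis psiH_mono : increasing_on_clopen psiH.
Hypothesis psiH_submod : submodular_on_clopen psiH.
Hypothesis psiH0 : psiH set0 = 0.

Local Notation psiK := (Defs.psiK psiH).
Local Notation psiB := (Defs.psiB psiH).

Lemma psiH_ge0 H : clopen H -> 0 <= psiH H.
Proof. by move=> cH; rewrite -psiH0; apply: psiH_mono => //; exact: clopen0. Qed.

Let psiK_set K := [set psiH H | H in [set H | clopen H /\ K `<=` H]].

Let psiK_set_neq0 K : psiK_set K !=set0.
Proof. by exists (psiH setT), setT; split => //; exact: clopenT. Qed.

Let psiK_set_lbound K : has_lbound (psiK_set K).
Proof. by exists 0 => _ [H [cH _] <-]; exact: psiH_ge0. Qed.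

Lemma psiK_le_psiH K H : clopen H -> K `<=` H -> psiK K <= psiH H.
Proof. by move=> cH KH; apply: ge_inf (psiK_set_lbound K) _ _; exists H. Qed.

Lemma psiK_approx K e : 0 < e ->
  exists H, [/\ clopen H, K `<=` H & psiH H < psiK K + e].
Proof.
move=> e0.
have [_ [H [cH KH] <-] ?] :=
  inf_adherent e0 (conj (psiK_set_neq0 K) (psiK_set_lbound K)).
by exists H.
Qed.

Lemma psiK_ge0 K : 0 <= psiK K.
Proof.
by apply: lb_le_inf (psiK_set_neq0 K) _ => _ [H [cH _] <-]; exact: psiH_ge0.
Qed.

Lemma le_psiK K K' : K `<=` K' -> psiK K <= psiK K'.
Proof.
move=> KK'; apply: lb_le_inf (psiK_set_neq0 K') _ => _ [H [cH K'H] <-].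
by apply: psiK_le_psiH => //; exact: subset_trans KK' K'H.
Qed.

Lemma psiK_strong_subadditive X Y :
  psiK (X `|` Y) + psiK (X `&` Y) <= psiK X + psiK Y.
Proof.
apply/ler_addgt0Pr => e e0; have e20 : 0 < e / 2 by rewrite divr_gt0.
have [H [cH XH XHe]] := psiK_approx X e20.
have [H' [cH' YH' YH'e]] := psiK_approx Y e20.
have XYU : psiK (X `|` Y) <= psiH (H `|` H').
  by apply: psiK_le_psiH; [exact: clopenU|exact: setUSS].
have XYI : psiK (X `&` Y) <= psiH (H `&` H').
  by apply: psiK_le_psiH; [exact: clopenI|exact: setISS].
have := psiH_submod cH cH'; lra.
Qed.

Let psiB_set B := [set psiK K | K in [set K | compact K /\ K `<=` B]].

Let psiB_set_neq0 B : psiB_set B !=set0.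
Proof. by exists (psiK set0), set0; split => //; exact: compact0. Qed.

Let psiB_set_ubound B : has_ubound (psiB_set B).
Proof.
exists (psiH setT) => _ [K _ <-].
by apply: psiK_le_psiH => //; exact: clopenT.
Qed.

Lemma psiK_le_psiB K B : compact K -> K `<=` B -> psiK K <= psiB B.
Proof. by move=> cK KB; apply: ub_le_sup (psiB_set_ubound B) _ _; exists K. Qed.

Lemma psiB_approx B e : 0 < e ->
  exists K, [/\ compact K, K `<=` B & psiB B - e < psiK K].
Proof.
move=> e0.
have [_ [K [cK KB] <-] ?] :=
  sup_adherent e0 (conj (psiB_set_neq0 B) (psiB_set_ubound B)).
by exists K.
Qed.

Lemma le_psiB B B' : B `<=` B' -> psiB B <= psiB B'.
Proof.
move=> BB'; apply: ge_sup (psiB_set_neq0 B) _ => _ [K [cK KB] <-].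
by apply: psiK_le_psiB => //; exact: subset_trans KB BB'.
Qed.

Lemma psiB_ge0 B : 0 <= psiB B.
Proof.
by apply: le_trans (psiK_ge0 set0) _; apply: psiK_le_psiB => //; exact: compact0.
Qed.

Lemma psiB_le_psiH H : clopen H -> psiB H <= psiH H.
Proof.
move=> cH; apply: ge_sup (psiB_set_neq0 H) _ => _ [K [cK KH] <-].
exact: psiK_le_psiH.
Qed.

(* Cutting a compact subset of [U `|` V] along a clopen set between its part
   outside [V] and [U] yields compact pieces inside [U] and inside [V]. *)
Lemma psiB_strong_subadditive_open U V : open U -> open V ->
  psiB (U `|` V) + psiB (U `&` V) <= psiB U + psiB V.
Proof.
move=> oU oV; apply/ler_addgt0Pr => e e0; have e20 : 0 < e / 2 by rewrite divr_gt0.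
have [K [cK KUV Ke]] := psiB_approx (U `|` V) e20.
have [L [cL LUV Le]] := psiB_approx (U `&` V) e20.
have cK' : closed K by exact/cantor_compactP.
have cL' : closed L by exact/cantor_compactP.
have [H [[oH cH] KVH HU]] : exists H, [/\ clopen H, K `\` V `<=` H & H `<=` U].
  apply: clopen_between oU _.
    by apply/cantor_compactP; apply: closedI => //; rewrite closedC.
  by move=> x [Kx nVx]; case: (KUV x Kx) => // /nVx.
pose K1 := (K `&` H) `|` L; pose K2 := (K `\` H) `|` L.
have cK1 : compact K1 by apply/cantor_compactP; apply: closedU => //; exact: closedI.
have cK2 : compact K2.
  by apply/cantor_compactP; apply: closedU => //; apply: closedI => //; rewrite closedC.
have K1U : K1 `<=` U by move=> x [[_ /HU]|/LUV[]].
have K2V : K2 `<=` V.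
  by move=> x [[Kx nHx]|/LUV[]] //; apply: contrapT => nVx; exact/nHx/KVH.
have KK : psiK K <= psiK (K1 `|` K2).
  by apply: le_psiK => x Kx; have [Hx|nHx] := pselect (H x); [left; left|right; left].
have LL : psiK L <= psiK (K1 `&` K2) by apply: le_psiK => x Lx; split; right.
have := psiK_strong_subadditive K1 K2.
have := psiK_le_psiB cK1 K1U; have := psiK_le_psiB cK2 K2V; lra.
Qed.

Lemma psiB_bigcup_open (U : nat -> set C) r : (forall n, open (U n)) ->
  (forall n, U n `<=` U n.+1) -> (forall n, psiB (U n) <= r) ->
  psiB (\bigcup_n U n) <= r.
Proof.
move=> oU incU Ur; apply: ge_sup (psiB_set_neq0 _) _ => _ [K [cK KU] <-].
have [n KUn] := compact_nondecreasing_open_cover cK oU incU KU.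
exact: le_trans (psiK_le_psiB cK KUn) (Ur n).
Qed.

Definition psiO (X : set C) : R :=
  inf [set psiB U | U in [set U | open U /\ X `<=` U]].

Let psiO_set X := [set psiB U | U in [set U | open U /\ X `<=` U]].

Let psiO_set_neq0 X : psiO_set X !=set0.
Proof. by exists (psiB setT), setT; split => //; exact: openT. Qed.

Let psiO_set_lbound X : has_lbound (psiO_set X).
Proof. by exists 0 => _ [U _ <-]; exact: psiB_ge0. Qed.

Lemma psiO_le_psiB X U : open U -> X `<=` U -> psiO X <= psiB U.
Proof. by move=> oU XU; apply: ge_inf (psiO_set_lbound X) _ _; exists U. Qed.

Lemma psiO_approx X e : 0 < e ->
  exists U, [/\ open U, X `<=` U & psiB U < psiO X + e].
Proof.
move=> e0.
have [_ [U [oU XU] <-] ?] :=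
  inf_adherent e0 (conj (psiO_set_neq0 X) (psiO_set_lbound X)).
by exists U.
Qed.

Lemma le_psiO X Y : X `<=` Y -> psiO X <= psiO Y.
Proof.
move=> XY; apply: lb_le_inf (psiO_set_neq0 Y) _ => _ [U [oU YU] <-].
by apply: psiO_le_psiB => //; exact: subset_trans XY YU.
Qed.

(* The errors [e / 2 ^ n.+1] of the successive approximations telescope, by
   strong subadditivity, into a total error [e]. *)
Lemma nondecreasing_open_envelopes (X : nat -> set C) e :
  (forall n, X n `<=` X n.+1) -> 0 < e ->
  exists V : nat -> set C, [/\ forall n, open (V n), forall n, V n `<=` V n.+1,
    forall n, X n `<=` V n & forall n, psiB (V n) <= psiO (X n) + e].
Proof.
move=> incX e0.
pose d n : R := e * (2^-1) ^+ n.+1.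
have d0 n : 0 < d n by rewrite mulr_gt0 // exprn_gt0 // invr_gt0.
have dS n : d n = 2 * d n.+1 by rewrite /d [in RHS]exprS; field.
have /choice [U XU] : forall n, exists U,
    [/\ open U, X n `<=` U & psiB U < psiO (X n) + d n].
  by move=> n; exact: psiO_approx.
pose fix V n := if n is m.+1 then V m `|` U m.+1 else U 0%N.
have oV n : open (V n).
  by elim: n => [|n IH]; [case: (XU 0%N)|apply: openU => //; case: (XU n.+1)].
have XV n : X n `<=` V n.
  case: n => [|n]; first by case: (XU 0%N).
  by move=> x Xx; right; case: (XU n.+1) => _ /(_ x Xx).
have psiBV n : psiB (V n) <= psiO (X n) + e - d n.
  elim: n => [|n IH].
    have [_ _ U0] := XU 0%N; have : d 0%N = e / 2 by rewrite /d expr1.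
    by rewrite /=; lra.
  have [oUn XUn Une] := XU n.+1.
  have := psiB_strong_subadditive_open (oV n) oUn.
  have : psiO (X n) <= psiB (V n `&` U n.+1).
    apply: psiO_le_psiB; first exact: openI.
    by move=> x Xx; split; [exact: XV|apply: XUn; exact: incX].
  have := dS n; rewrite /=; lra.
exists V; split => // n; first by move=> x Vx; left.
by have := psiBV n; have := d0 n; lra.
Qed.

Lemma psiO_bigcup_nondecreasing (X : nat -> set C) r :
  (forall n, X n `<=` X n.+1) -> (forall n, psiO (X n) <= r) ->
  psiO (\bigcup_n X n) <= r.
Proof.
move=> incX Xr; apply/ler_addgt0Pr => e e0.
have [V [oV incV XV Ve]] := nondecreasing_open_envelopes incX e0.
apply: le_trans (psiO_le_psiB (@bigcup_open _ _ setT _ (fun n _ => oV n)) _) _.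
  by move=> x [n _ Xx]; exists n => //; exact: XV.
by apply: psiB_bigcup_open => // n; have := Ve n; have := Xr n; lra.
Qed.

Lemma psiO_gt_bigcup (X : set C) (Y : nat -> set C) r :
  (forall n, Y n `<=` Y n.+1) -> X `<=` \bigcup_n Y n -> r < psiO X ->
  exists n, r < psiO (Y n).
Proof.
move=> incY XY rX; apply: contrapT => nY.
have Yr n : psiO (Y n) <= r by rewrite leNgt; apply/negP => rY; apply: nY; exists n.
by have := le_trans (le_psiO XY) (psiO_bigcup_nondecreasing incY Yr); rewrite leNgt rX.
Qed.

Lemma psiK_image_bigcap (f : C -> C) (L : nat -> set C) r : continuous f ->
  (forall n, closed (L n)) -> (forall n, L n.+1 `<=` L n) ->
  (forall n, r < psiO (f @` L n)) -> r <= psiK (f @` \bigcap_n L n).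
Proof.
move=> cf cL decL rL; apply: lb_le_inf (psiK_set_neq0 _) _ => _ [H [[oH cH] LH] <-].
have [|n LnH] :=
  closed_nonincreasing_subset_open cL decL (open_comp (fun x _ => cf x) oH).
  by move=> x Lx; apply: LH; exists x.
have fLnH : f @` L n `<=` H by move=> _ [x Lx <-]; exact: LnH.
have := rL n; have := le_psiO fLnH; have := psiO_le_psiB oH (@subset_refl _ H).
by have := psiB_le_psiH (conj oH cH); lra.
Qed.

Lemma psiO_projection_shrink (G L : set C) (Q : nat -> set C) r :
  (forall m, Q m `<=` Q m.+1) -> G `<=` \bigcup_m Q m ->
  r < psiO (projection (G `&` L)) ->
  exists m, r < psiO (projection (G `&` (L `&` Q m))).
Proof.
move=> incQ GQ; apply: psiO_gt_bigcup.
  by move=> m x [y [Gy [Ly Qy]]]; exists y; do 2!split => //; exact: incQ.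
by move=> x [y [Gy Ly]]; have [m _ Qy] := GQ _ Gy; exists m => //; exists y.
Qed.

(* Choquet's argument: shrink the F_sigma_delta set above [A] by closed sets
   [L n] keeping the outer capacity of the projection above [r]; the
   projection of their intersection is then a compact subset of [A]. *)
Lemma analytic_psiO_le_psiB A : analytic A -> psiO A <= psiB A.
Proof.
move=> [P [cP ->]]; set G := [set z | forall n, exists m, P n m z].
suff psiB_gt r : r < psiO (projection G) -> r <= psiB (projection G).
  by apply/ler_addgt0Pr => e e0; have := psiB_gt (psiO (projection G) - e); lra.
move=> rG; pose Q n m := \bigcup_(j in `I_m.+1) P n j.
have cQ n m : closed (Q n m).
  by rewrite /Q bigcup_mkord; apply: closed_bigsetU => j _; exact: cP.
pose good L := closed L /\ r < psiO (projection (G `&` L)).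
have /choice [next nextP] : forall nL : nat * set C,
    exists m, good nL.2 -> good (nL.2 `&` Q nL.1 m).
  move=> [n L]; have [[cL rL]|] := pselect (good L); last by exists 0%N.
  have [||m rm] := psiO_projection_shrink (Q := Q n) _ _ rL.
  - by move=> m z [j jm Pj]; exists j => //; exact: leqW.
  - by move=> z Gz; have [m Pm] := Gz n; exists m => //; exists m => //=.
  by exists m => _; split => //; exact: closedI.
pose fix L n := if n is k.+1 then L k `&` Q k (next (k, L k)) else setT.
have goodL n : good (L n).
  elim: n => [|n IH]; last exact: nextP (n, L n) IH.
  by split; [exact: closedT|rewrite setIT].
have LG : \bigcap_n L n `<=` G.
  by move=> z Lz n; have [_ [j _ Pj]] := Lz n.+1 I; exists j.
have cEL : compact (evens @` \bigcap_n L n).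
  apply: continuous_compact; first exact/continuous_subspaceT/reindex_continuous.
  by apply/cantor_compactP; apply: closed_bigI => n _; case: (goodL n).
apply: le_trans (psiK_le_psiB cEL _).
  apply: psiK_image_bigcap => [|n|n z []//|n].
  - exact: reindex_continuous.
  - by case: (goodL n).
  - apply: lt_le_trans (goodL n).2 (le_psiO _).
    by move=> x [y [_ Ly]]; exists (interleave x y); rewrite ?evens_interleave.
by move=> _ [z Lz <-]; exists (odds z); rewrite interleave_evens_odds; exact: LG.
Qed.

Lemma analytic_psiB_outer_approx A e : analytic A -> 0 < e ->
  exists U, [/\ open U, A `<=` U & psiB U < psiB A + e].
Proof.
move=> aA e0; have [U [oU AU Ue]] := psiO_approx A e0.
exists U; split => //; apply: lt_le_trans Ue _.
by rewrite lerD2r analytic_psiO_le_psiB.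
Qed.

Lemma pushB_continuous_approx q (F : C -> 'I_q) d : borel_map F -> 0 < d ->
  exists G : C -> 'I_q, continuous_discrete G /\
    forall A : {set 'I_q}, `|pushB psiH F A - pushB psiH G A| < d.
Proof.
move=> Fborel d0; pose B (A : {set 'I_q}) := F @^-1` [set i | i \in A].
have /choice [U UB] : forall A : {set 'I_q}, exists U,
    [/\ open U, B A `<=` U & psiB U < psiB (B A) + d].
  by move=> A; apply: analytic_psiB_outer_approx => //; exact: analytic_preimage.
have /choice [K KB] : forall A : {set 'I_q}, exists K,
    [/\ compact K, K `<=` B A & psiB (B A) - d < psiK K].
  by move=> A; exact: psiB_approx.
have [||||G [cG GKU]] := @continuous_sandwich q F K U.
- by move=> A; have [/cantor_compactP] := KB A.
- by move=> A; case: (UB A).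
- by move=> A; case: (KB A).
- by move=> A; case: (UB A).
exists G; split => // A; rewrite ltr_norml.
have [cKA _ KAd] := KB A; have [_ _ UAd] := UB A; have [KG GU] := GKU A.
have := psiK_le_psiB cKA KG; have := le_psiB GU.
by rewrite /pushB -/(B A) => ? ?; apply/andP; split; lra.
Qed.

End Capacity.

(** * Pointwise closeness of setfunctions bounds [setfun_dist] *)

Section Distance.
Variable R : realType.

Lemma card_set_ord k : #|{set 'I_k}| = (2 ^ k)%N.
Proof. by rewrite -cardsT -powersetT card_powerset cardsT card_ord. Qed.

Lemma edist_le k (x y : {set 'I_k} -> R) d :
  (forall A, `|x A - y A| <= d) -> Defs.edist x y <= Num.sqrt (2 ^+ k * d ^+ 2).
Proof.
move=> xyd; apply: ler_wsqrtr.
apply: le_trans (_ : \sum_(A : {set 'I_k}) d ^+ 2 <= _).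
  apply: ler_sum => A _; have d0 : 0 <= d := le_trans (normr_ge0 _) (xyd A).
  by rewrite -real_normK ?num_real // ler_sqr ?nnegrE.
by rewrite sumr_const card_set_ord -[d ^+ 2 *+ _]mulr_natl natrX.
Qed.

Lemma sup_inf_diag_le (T : Type) (t0 : T) (D : T -> T -> R) b :
  (forall s t, 0 <= D s t) -> (forall t, D t t <= b) ->
  0 <= sup [set inf [set D s t | t in [set: T]] | s in [set: T]] <= b.
Proof.
move=> D0 Db.
have infD s : 0 <= inf [set D s t | t in [set: T]] <= b.
  apply/andP; split.
    by apply: lb_le_inf => [|_ [t _ <-]]; [exists (D s s), s|exact: D0].
  apply: le_trans (Db s); apply: ge_inf; last by exists s.
  by exists 0 => _ [t _ <-]; exact: D0.
apply/andP; split.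
  apply: le_trans (proj1 (andP (infD t0))) _; apply: ub_le_sup; last by exists t0.
  by exists b => _ [s _ <-]; case/andP: (infD s).
apply: ge_sup => [|_ [s _ <-]]; last by case/andP: (infD s).
by exists (inf [set D t0 t | t in [set: T]]), t0.
Qed.

Lemma dH_le q k (phi1 phi2 : {set 'I_q} -> R) d :
  (forall A, `|phi1 A - phi2 A| <= d) ->
  0 <= dH phi1 phi2 k.+1 <= Num.sqrt (2 ^+ k.+1 * d ^+ 2).
Proof.
move=> phid; pose t0 : 'I_q -> 'I_k.+1 := fun=> ord0.
pose D (f g : 'I_q -> 'I_k.+1) := Defs.edist (quot phi1 f) (quot phi2 g).
have D0 (f g : 'I_q -> 'I_k.+1) : 0 <= D f g by exact: sqrtr_ge0.
have Dd (f : 'I_q -> 'I_k.+1) : D f f <= Num.sqrt (2 ^+ k.+1 * d ^+ 2).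
  by apply: edist_le => A; exact: phid.
have /andP[l1 u1] := sup_inf_diag_le t0 D0 Dd.
have /andP[_ u2] := sup_inf_diag_le (D := fun g f => D f g) t0 (fun g f => D0 f g) Dd.
apply/andP; split; first by rewrite le_max l1.
by rewrite ge_max; apply/andP; split; [exact: u1|exact: u2].
Qed.

Lemma dH_term_le k (d : R) : 0 <= d ->
  (2%:R : R) ^- k * Num.sqrt (2 ^+ k * d ^+ 2) <= d * (3 / 4) ^+ k.
Proof.
move=> d0.
have sqrt_le : Num.sqrt (2 ^+ k * d ^+ 2) <= d * (3 / 2) ^+ k.
  rewrite -[X in _ <= X]ger0_norm ?mulr_ge0 ?exprn_ge0 // -sqrtr_sqr.
  apply: ler_wsqrtr; rewrite exprMn [X in _ <= X]mulrC.
  apply: ler_wpM2r; first exact: sqr_ge0.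
  by rewrite exprAC; apply: lerXn2r; rewrite ?nnegrE ?exprn_ge0 // ?expr2; lra.
have -> : (3 / 4 : R) = 3 / 2 * 2^-1 by field.
rewrite exprMn exprVn [X in X <= _]mulrC [X in _ <= X]mulrA.
by apply: ler_wpM2r; rewrite // invr_ge0 exprn_ge0.
Qed.

Lemma sum_three_quarters_pow_le n : \sum_(1 <= k < n) (3 / 4 : R) ^+ k <= 3.
Proof.
have sumE m : \sum_(1 <= k < m.+1) (3 / 4 : R) ^+ k = 3 * (1 - (3 / 4) ^+ m).
  elim: m => [|m IH]; first by rewrite big_geq // expr0 subrr mulr0.
  by rewrite big_nat_recr //= IH exprS; move: ((3 / 4 : R) ^+ m) => x; lra.
case: n => [|n]; first by rewrite big_geq.
rewrite sumE; have : 0 <= (3 / 4 : R) ^+ n by apply: exprn_ge0; lra.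
lra.
Qed.

Lemma setfun_dist_le q (phi1 phi2 : {set 'I_q} -> R) d : 0 <= d ->
  (forall A, `|phi1 A - phi2 A| <= d) -> (setfun_dist phi1 phi2 <= (3 * d)%:E)%E.
Proof.
move=> d0 phid.
have termP k : (1 <= k)%N ->
    0 <= (2%:R : R) ^- k * dH phi1 phi2 k <= d * (3 / 4) ^+ k.
  case: k => // k _; have /andP[dH0 dHd] := dH_le k phid.
  apply/andP; split; first by rewrite mulr_ge0 // invr_ge0 exprn_ge0.
  apply: le_trans (dH_term_le k.+1 d0).
  by apply: ler_wpM2l dHd; rewrite invr_ge0 exprn_ge0.
apply: lime_le.
  apply: (@is_cvg_nneseries _ _ xpredT) => n n1 _.
  by rewrite lee_fin; case/andP: (termP n n1).
apply: nearW => n; rewrite sumEFin lee_fin.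
apply: le_trans (_ : \sum_(1 <= k < n) d * (3 / 4) ^+ k <= _).
  by apply: ler_sum_nat => k /andP[k1 _]; case/andP: (termP k k1).
by rewrite -mulr_sumr mulrC; apply: ler_wpM2r => //; exact: sum_three_quarters_pow_le.
Qed.

End Distance.

Unset Implicit Arguments.

Theorem lemma3p9 (R : realType) (psiH : set C -> R)
  (Hinc : increasing_on_clopen psiH) (Hsub : submodular_on_clopen psiH)
  (H0 : psiH set0 = 0)
  (q : nat) (F : C -> 'I_q) (HF : borel_map F)
  (eps : R) (Heps : 0 < eps) :
  exists G : C -> 'I_q, continuous_discrete G /\
    (setfun_dist (pushB psiH F) (pushB psiH G) < eps%:E)%E.
Proof.
have eps4 : 0 < eps / 4 by rewrite divr_gt0.
have [G [cG FG]] := pushB_continuous_approx Hinc Hsub H0 HF eps4.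
exists G; split => //.
apply: le_lt_trans (setfun_dist_le (ltW eps4) (fun A => ltW (FG A))) _.
by rewrite lte_fin; lra.
Qed.
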